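(* Let $p$ be the transition density of a subordinator as described in the context, and let $q\colon\mathbb{R}\to[0,\infty]$ be measurable. Assume that for some $s<t$ and some $M<\infty$, for all $x\in\mathbb{R}$, $$\int_s^t\int_{\mathbb{R}}p(s,x,u,z)q(z)\,dz\,du\le M.$$ Then $q\in L^1_{loc}(\mathbb{R})$.
   Context: A subordinator is a nondecreasing Lévy process on $\mathbb{R}$. We assume its distribution at each time $t>0$ has a density $p_t$ with respect to Lebesgue measure, and set $p(s,x,t,y)=p_{t-s}(y-x)$ for $s<t$; $p$ is space-time homogeneous, $p(s,x,t,y)=0$ whenever $t\le s$ or $y\le x$, and $p(s,x,t,y)>0$ otherwise. *)

From HB Require Import structures.
From mathcomp Require Import all_boot all_order all_algebra.
From mathcomp Require Import all_classical all_reals all_analysis.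
From mathcomp Require Import measurable_realfun.
Set Implicit Arguments. Unset Strict Implicit. Unset Printing Implicit Defensive.
Import Order.TTheory GRing.Theory Num.Theory.
Import numFieldNormedType.Exports.
Local Open Scope classical_set_scope.
Local Open Scope ring_scope.

(* [p t y] is the density at y of the law of X_t, for t > 0, where X is a
   subordinator (nondecreasing Levy process).  Its one-dimensional laws form a
   weakly (stochastically) continuous convolution semigroup of probability
   measures carried by [0, +oo); conversely every such semigroup is the
   family of one-dimensional laws of a subordinator.  The version of the
   densities is chosen as in the paper: p_t(y) = 0 for y <= 0 and
   p_t(y) > 0 for y > 0, jointly measurable in (t, y). *)
Definition subordinator_density (R : realType) (p : R -> R -> R) : Prop :=
  measurable_fun [set tz : R * R | 0 < tz.1] (fun tz => p tz.1 tz.2) /\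
      (forall t y, 0 < t -> y <= 0 -> p t y = 0) /\
      (forall t y, 0 < t -> 0 < y -> 0 < p t y) /\
      (forall t, 0 < t -> (\int[lebesgue_measure]_y (p t y)%:E = 1)%E) /\
      (forall t r, 0 < t -> 0 < r ->
         {ae lebesgue_measure, forall y, (p (t + r) y)%:E =
            (\int[lebesgue_measure]_z (p t z * p r (y - z))%:E)%E}) /\
      (forall e, 0 < e ->
         (fun t => \int[lebesgue_measure]_(y in `]e, +oo[) (p t y)%:E)%E
           @ 0^'+ --> 0%E).

Definition ptrans (R : realType) (p : R -> R -> R) (s x t y : R) : R :=
  if s < t then p (t - s) (y - x) else 0.

From HB Require Import structures.
From mathcomp Require Import all_boot all_order all_algebra.
From mathcomp Require Import all_classical all_reals all_analysis.
From mathcomp Require Import measurable_realfun.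
From mathcomp Require Import lra.
Set Implicit Arguments. Unset Strict Implicit. Unset Printing Implicit Defensive.
Import Order.TTheory GRing.Theory Num.Theory.
Import numFieldNormedType.Exports.
Local Open Scope classical_set_scope.
Local Open Scope ring_scope.
Local Open Scope ereal_scope.

(* Average the hypothesis over the starting points x in I = [a - 2, b - 1].
   By Tonelli,
     M |I| >= \int_I \int_s^t \int p_(u-s)(z - x) q(z) dz du dx
            = \int q(z) Lambda(z) dz,
   where Lambda(z) = \int_s^t \int_(z - I) p_(u-s)(y) dy du.  For z in [a, b]
   the interval z - I contains [1, 2], so Lambda(z) >= kappa, the mass that the
   densities p_(u-s), s < u < t, put on [1, 2]; kappa > 0 because the densities
   are positive on (0, +oo).  Hence kappa \int_a^b q <= M |I| < +oo. *)

Lemma pmule_le_lty (R : realDomainType) (k x y : \bar R) :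
  0 < k -> k * x <= y -> y < +oo -> x < +oo.
Proof.
move=> k0 kxy ylty; rewrite ltNge leye_eq; apply/negP => /eqP xoo.
by move: kxy; rewrite xoo gt0_muley// leye_eq => /eqP yoo; rewrite yoo ltxx in ylty.
Qed.

Lemma integral_gt0 d (T : measurableType d) (R : realType)
  (m : {measure set T -> \bar R}) (D : set T) (f : T -> \bar R) :
  measurable D -> measurable_fun D f -> (forall x, D x -> 0 < f x) ->
  0 < m D -> 0 < \int[m]_(x in D) f x.
Proof.
move=> mD mf fD_gt0 mD_gt0.
rewrite lt0e integral_ge0 ?andbT; last by move=> x /fD_gt0 /ltW.
apply/negP => /eqP intf0.
have : \int[m]_(x in D) `|f x| = 0.
  rewrite -intf0; apply: eq_integral => x /[!inE] Dx.
  by rewrite gee0_abs// ltW// fD_gt0.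
move/(ae_eq_integral_abs m mD mf) => [N [mN N0 fN]].
have DN : D `<=` N.
  by move=> x Dx; apply: fN => /(_ Dx) fx0; have := fD_gt0 x Dx; rewrite fx0 ltxx.
have : m D <= 0 by rewrite -N0; exact: le_measure (mem_set mD) (mem_set mN) DN.
by rewrite leNgt mD_gt0.
Qed.

Lemma compact_sub_itvcc (R : realType) (A : set R) : compact A ->
  exists a b : R, A `<=` [set` `[a, b]%R].
Proof.
move=> /compact_bounded [r [_ Ar]].
have /Ar rA : (r < `|r| + 1)%R by have := ler_norm r; lra.
by exists (- (`|r| + 1))%R, (`|r| + 1)%R => x /rA; rewrite /= in_itv /= -ler_norml.
Qed.

Section lebesgue_reflection.
Context (R : realType) (z : R).
Notation mu := (@lebesgue_measure R).

Let reflect (x : measurableTypeR R) : measurableTypeR R := (z - x)%R.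

Let measurable_reflect : measurable_fun setT reflect.
Proof. exact: measurable_funB. Qed.

Let mu_reflect := measure_function_pushforward__canonical__measure_function_Measure
  mu measurable_reflect.

Let mu_reflectE : forall A, measurable A -> mu A = mu_reflect A.
Proof.
apply: lebesgue_measure_unique => _ [[a b] _ <-] /=; rewrite /pushforward.
have -> : reflect @^-1` `]a, b] = [set` `[z - b, z - a[%R].
  by apply/seteqP; split => x /=; rewrite /reflect !in_itv /= => /andP[? ?];
    apply/andP; split; lra.
rewrite !lebesgue_measure_itv /= !lte_fin ltrD2l ltrN2.
by case: ifP => // _; rewrite -!EFinD; congr EFin; lra.
Qed.

Lemma ge0_integral_reflect (f : R -> \bar R) : measurable_fun setT f ->
  (forall y, 0 <= f y) -> \int[mu]_x f (z - x)%R = \int[mu]_y f y.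
Proof.
move=> mf f0.
rewrite [RHS](eq_measure_integral mu_reflect); last first.
  by move=> A mA _; exact: mu_reflectE.
by rewrite ge0_integral_pushforward// preimage_setT.
Qed.

End lebesgue_reflection.

Section fubini_tonelli3.
Context d1 d2 d3 (T1 : measurableType d1) (T2 : measurableType d2)
  (T3 : measurableType d3) (R : realType).
Variables (m1 : {sigma_finite_measure set T1 -> \bar R})
  (m2 : {sigma_finite_measure set T2 -> \bar R})
  (m3 : {sigma_finite_measure set T3 -> \bar R}).
Variable f : T1 -> T2 -> T3 -> \bar R.
Hypothesis f0 : forall x y z, 0 <= f x y z.
Hypothesis mf : measurable_fun setT (fun w : T1 * (T2 * T3) => f w.1 w.2.1 w.2.2).

Let measurable_f_xy_z :
  measurable_fun setT (fun w : (T1 * T2) * T3 => f w.1.1 w.1.2 w.2).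
Proof.
apply: (measurableT_comp mf (g := fun w : (T1 * T2) * T3 => (w.1.1, (w.1.2, w.2)))).
apply: measurable_fun_pair; first exact: measurableT_comp measurable_fst measurable_fst.
apply: measurable_fun_pair => //; exact: measurableT_comp measurable_snd measurable_fst.
Qed.

Let measurable_f_xz y : measurable_fun setT (fun xz : T1 * T3 => f xz.1 y xz.2).
Proof.
apply: (measurableT_comp mf (g := fun xz : T1 * T3 => (xz.1, (y, xz.2)))).
by apply: measurable_fun_pair => //; apply: measurable_fun_pair.
Qed.

Let measurable_fun_integral1 :
  measurable_fun setT (fun yz : T2 * T3 => \int[m1]_x f x yz.1 yz.2).
Proof. exact: measurable_fun_fubini_tonelli_G mf (fun _ => f0 _ _ _). Qed.

Let measurable_fun_integral3 :
  measurable_fun setT (fun xy : T1 * T2 => \int[m3]_z f xy.1 xy.2 z).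
Proof.
exact: measurable_fun_fubini_tonelli_F measurable_f_xy_z (fun _ => f0 _ _ _).
Qed.

Lemma measurable_fun_integral23 :
  measurable_fun setT (fun x => \int[m2]_y \int[m3]_z f x y z).
Proof.
apply: (measurable_fun_fubini_tonelli_F _ measurable_fun_integral3) => xy.
exact: integral_ge0.
Qed.

Lemma measurable_fun_integral21 :
  measurable_fun setT (fun z => \int[m2]_y \int[m1]_x f x y z).
Proof.
apply: (measurable_fun_fubini_tonelli_G _ measurable_fun_integral1) => yz.
exact: integral_ge0.
Qed.

Lemma fubini_tonelli3 :
  \int[m1]_x \int[m2]_y \int[m3]_z f x y z =
  \int[m3]_z \int[m2]_y \int[m1]_x f x y z.
Proof.
rewrite (fubini_tonelli (fun xy : T1 * T2 => \int[m3]_z f xy.1 xy.2 z))//; last first.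
  by move=> xy; exact: integral_ge0.
transitivity (\int[m2]_y \int[m3]_z \int[m1]_x f x y z).
  apply: eq_integral => y _.
  exact: (fubini_tonelli (fun xz : T1 * T3 => f xz.1 y xz.2)).
rewrite (fubini_tonelli (fun yz : T2 * T3 => \int[m1]_x f x yz.1 yz.2))//.
by move=> yz; exact: integral_ge0.
Qed.

End fubini_tonelli3.

Definition density_ext (R : realType) (p : R -> R -> R) : R * R -> R :=
  (fun tz => p tz.1 tz.2) \_ [set tz | (0 < tz.1)%R].

Lemma ptransE (R : realType) (p : R -> R -> R) s x u z :
  ptrans p s x u z = density_ext p (u - s, z - x)%R.
Proof.
rewrite /ptrans /density_ext patchE; case: ifPn => su.
  by rewrite mem_set //= subr_gt0.
by case: ifPn => // /set_mem /=; rewrite subr_gt0 (negbTE su).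
Qed.

Section density_ext.
Context (R : realType) (p : R -> R -> R) (hp : subordinator_density p).

Lemma measurable_density_ext : measurable_fun setT (density_ext p).
Proof.
have mpos : measurable [set tz : R * R | (0 < tz.1)%R].
  have := @measurable_fst _ _ R R measurableT _ (measurable_itv `]0%R, +oo[).
  rewrite setTI; congr measurable.
  by apply/seteqP; split => tz /=; rewrite in_itv /= andbT.
by apply/(measurable_restrictT _ mpos); case: hp.
Qed.

Lemma density_ext_ge0 tz : (0 <= density_ext p tz)%R.
Proof.
rewrite /density_ext patchE; case: ifPn => // /set_mem /= t_gt0.
case: hp => _ [p0 [p_gt0 _]]; have [y_le0|y_gt0] := leP tz.2 0%R.
  by rewrite p0.
exact/ltW/p_gt0.
Qed.

Lemma density_ext_gt0 r y : (0 < r)%R -> (0 < y)%R -> (0 < density_ext p (r, y))%R.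
Proof.
move=> r_gt0 y_gt0; rewrite /density_ext patchE mem_set//=.
by case: hp => _ [_ [+ _]]; apply.
Qed.

End density_ext.

Section local_integrability.
Context (R : realType) (p : R -> R -> R) (hp : subordinator_density p)
  (q : R -> \bar R) (mq : measurable_fun setT q) (q0 : forall z, 0 <= q z)
  (s t M : R) (st : (s < t)%R)
  (hM : forall x : R, \int[lebesgue_measure]_(u in `]s, t[)
        \int[lebesgue_measure]_z ((ptrans p s x u z)%:E * q z) <= M%:E)
  (a b : R).
Notation mu := (@lebesgue_measure R).

Let I : set R := [set` `[a - 2, b - 1]%R].
Let J : set R := [set` `]s, t[%R].
Let B : set R := [set` `[1, 2]%R].

Let indic_ge0 (D : set R) x : (0 <= \1_D x :> R)%R.
Proof. by rewrite indicE ler0n. Qed.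

Let measurable_indic_comp d (T : measurableType d) (D : set R) (f : T -> R) :
  measurable D -> measurable_fun setT f ->
  measurable_fun setT (fun w => \1_D (f w) : R).
Proof. by move=> mD; apply: measurableT_comp; exact: measurable_indic. Qed.

Let k (u y : R) : R := (\1_J u * density_ext p (u - s, y))%R.

Let k_ge0 u y : (0 <= k u y)%R.
Proof. by rewrite mulr_ge0 ?density_ext_ge0. Qed.

Let measurable_k : measurable_fun setT (fun uy : R * R => k uy.1 uy.2).
Proof.
apply: measurable_funM.
  by apply: measurable_indic_comp; [exact: measurable_itv|exact: measurable_fst].
apply: (measurableT_comp (measurable_density_ext hp)).
by apply: measurable_fun_pair => //; exact: measurable_funB.
Qed.

Let g (x u z : R) : R := (\1_I x * k u (z - x))%R.

Let g_ge0 x u z : (0 <= g x u z)%R.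
Proof. by rewrite mulr_ge0. Qed.

Let measurable_g_xu z : measurable_fun setT (fun xu : R * R => g xu.1 xu.2 z).
Proof.
apply: measurable_funM.
  by apply: measurable_indic_comp; [exact: measurable_itv|exact: measurable_fst].
apply: (measurableT_comp measurable_k (g := fun xu : R * R => (xu.2, z - xu.1)%R)).
by apply: measurable_fun_pair => //; exact: measurable_funB.
Qed.

Let K (x u z : R) := (g x u z)%:E * q z.

Let K_ge0 x u z : 0 <= K x u z.
Proof. by rewrite mule_ge0// lee_fin. Qed.

Let measurable_K :
  measurable_fun setT (fun w : R * (R * R) => K w.1 w.2.1 w.2.2).
Proof.
apply: emeasurable_funM; last first.
  exact: measurableT_comp mq (measurableT_comp measurable_snd measurable_snd).
apply/measurable_EFinP/measurable_funM.
  by apply: measurable_indic_comp; [exact: measurable_itv|exact: measurable_fst].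
apply: (measurableT_comp measurable_k
  (g := fun w : R * (R * R) => (w.2.1, w.2.2 - w.1)%R)).
apply: measurable_fun_pair; first exact: measurableT_comp measurable_fst measurable_snd.
apply: measurable_funB => //; exact: measurableT_comp measurable_snd measurable_snd.
Qed.

Let integral_K_le x : \int[mu]_u \int[mu]_z K x u z <= (\1_I x * M)%:E.
Proof.
rewrite indicE; have [xI|xI] := boolP (x \in I); last first.
  rewrite mul0r (eq_integral (cst 0)) ?integral0// => u _.
  rewrite (eq_integral (cst 0)) ?integral0// => z _.
  by rewrite /K /g indicE (negbTE xI) !mul0r mul0e.
rewrite mul1r (le_trans _ (hM x))// le_eqVlt; apply/orP; left; apply/eqP.
rewrite [RHS]integral_mkcond; apply: eq_integral => u _; rewrite patchE.
case: ifPn => uJ.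
  apply: eq_integral => z _.
  by rewrite /K /g /k ptransE indicE xI [\1_J _]indicE uJ !mul1r.
apply: integral0_eq => z _.
by rewrite /K /g /k indicE xI [\1_J _]indicE (negbTE uJ) mul1r mul0r mul0e.
Qed.

Let M_ge0 : (0 <= M)%R.
Proof.
rewrite -lee_fin (le_trans _ (hM 0%R))//.
apply: integral_ge0 => u _; apply: integral_ge0 => z _.
by rewrite ptransE mule_ge0// lee_fin density_ext_ge0.
Qed.

Let integral3_K_le : \int[mu]_x \int[mu]_u \int[mu]_z K x u z <= M%:E * mu I.
Proof.
have mI : measurable I by exact: measurable_itv.
apply: le_trans (ge0_le_integral mu measurableT _ _ _ (fun x _ => integral_K_le x)) _.
- by move=> x _; do 2!apply: integral_ge0 => ? _.
- exact: measurable_fun_integral23.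
- by apply/measurable_EFinP/measurable_funM => //; exact: measurable_indic.
under eq_integral => x _ do rewrite EFinM muleC.
rewrite ge0_integralZl_EFin//; last by apply/measurable_EFinP; exact: measurable_indic.
by rewrite integral_indic// setIT.
Qed.

Let Lambda z := \int[mu]_u \int[mu]_x (g x u z)%:E.

Let measurable_integral_g z :
  measurable_fun setT (fun u => \int[mu]_x (g x u z)%:E).
Proof.
have mg : measurable_fun setT (fun xu : R * R => (g xu.1 xu.2 z)%:E).
  exact/measurable_EFinP.
by apply: (measurable_fun_fubini_tonelli_G (m1 := mu) _ mg) => xu; rewrite lee_fin.
Qed.

Let integral2_K z : \int[mu]_u \int[mu]_x K x u z = Lambda z * q z.
Proof.
rewrite -ge0_integralZr//; last 2 first.
- exact: measurable_integral_g.
- by move=> u _; apply: integral_ge0 => x _; rewrite lee_fin.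
apply: eq_integral => u _; rewrite -ge0_integralZr//.
- by apply/measurable_EFinP; exact: measurable_fun_pair1 u (measurable_g_xu z).
- by move=> x _; rewrite lee_fin.
Qed.

Let h (u y : R) : R := (\1_B y * k u y)%R.

Let h_ge0 u y : (0 <= h u y)%R.
Proof. by rewrite mulr_ge0. Qed.

Let measurable_h : measurable_fun setT (fun uy : R * R => (h uy.1 uy.2)%:E).
Proof.
apply/measurable_EFinP/measurable_funM => //.
by apply: measurable_indic_comp; [exact: measurable_itv|exact: measurable_snd].
Qed.

Let measurable_integral_h :
  measurable_fun setT (fun u => \int[mu]_y (h u y)%:E).
Proof.
apply: (measurable_fun_fubini_tonelli_F (m2 := mu) _ measurable_h) => uy.
by rewrite lee_fin.
Qed.

Let kappa := \int[mu]_u \int[mu]_y (h u y)%:E.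

Let indic_B_le_I z y : (a <= z <= b)%R -> (\1_B y <= \1_I (z - y) :> R)%R.
Proof.
move=> /andP[az zb]; rewrite [X in (X <= _)%R]indicE.
have [yB|_] := boolP (y \in B); last exact: indic_ge0.
suff zyI : (z - y)%R \in I by rewrite indicE zyI.
move: yB; rewrite /B /I !inE /= !in_itv /= => /andP[y1 y2].
by apply/andP; split; lra.
Qed.

Let kappa_le_Lambda z : (a <= z <= b)%R -> kappa <= Lambda z.
Proof.
move=> abz; apply: ge0_le_integral => //.
- by move=> u _; apply: integral_ge0 => y _; rewrite lee_fin.
- exact: measurable_integral_g.
move=> u _; pose f y := (\1_I (z - y) * k u y)%:E.
have mf : measurable_fun setT f.
  apply/measurable_EFinP/measurable_funM; last first.
    exact: measurable_fun_pair2 u measurable_k.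
  by apply: measurable_indic_comp; [exact: measurable_itv|exact: measurable_funB].
have -> : \int[mu]_x (g x u z)%:E = \int[mu]_x f (z - x)%R.
  by apply: eq_integral => x _; rewrite /f subKr.
rewrite ge0_integral_reflect//; last by move=> y; rewrite lee_fin mulr_ge0.
apply: ge0_le_integral => //; first by move=> y _; rewrite lee_fin.
- exact: measurable_fun_pair2 u measurable_h.
- by move=> y _; rewrite lee_fin ler_wpM2r// indic_B_le_I.
Qed.

Let kappa_gt0 : 0 < kappa.
Proof.
have mJ : measurable J by exact: measurable_itv.
have mB : measurable B by exact: measurable_itv.
have h_gt0 u y : J u -> B y -> (0 < h u y)%R.
  move=> Ju By; rewrite /h /k !indicE !mem_set// !mul1r.
  move: Ju By; rewrite /J /B /= !in_itv /= => /andP[su _] /andP[y1 _].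
  by apply: density_ext_gt0 => //; lra.
have h_ge0E u y : 0 <= (h u y)%:E by rewrite lee_fin.
have integral_h_gt0 u : J u -> 0 < \int[mu]_y (h u y)%:E.
  move=> Ju; have mhu : measurable_fun setT (fun y => (h u y)%:E).
    exact: measurable_fun_pair2 u measurable_h.
  apply: lt_le_trans (ge0_subset_integral mu mB measurableT mhu
    (fun y _ => h_ge0E u y) (@subsetT _ B)).
  apply: integral_gt0 => //; first exact: measurable_funTS.
  - by move=> y By; rewrite lte_fin h_gt0.
  - change (0 < mu B); rewrite /B lebesgue_measure_itv /= lte_fin ltr1n -EFinD lte_fin.
    by rewrite subr_gt0 ltr1n.
have integral_h_ge0 u : 0 <= \int[mu]_y (h u y)%:E.
  by apply: integral_ge0 => y _; exact: h_ge0E.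
apply: lt_le_trans (ge0_subset_integral mu mJ measurableT measurable_integral_h
  (fun u _ => integral_h_ge0 u) (@subsetT _ J)).
apply: integral_gt0 => //; first exact: measurable_funTS.
change (0 < mu J).
by rewrite /J lebesgue_measure_itv /= lte_fin st -EFinD lte_fin subr_gt0.
Qed.

Lemma integral_itvcc_lty : \int[mu]_(z in `[a, b]) q z < +oo.
Proof.
have mab : measurable [set` `[a, b]%R] by exact: measurable_itv.
have MI_lty : M%:E * mu I < +oo.
  rewrite /I lebesgue_measure_itv /=.
  by case: ifP => _; rewrite ?mule0 -?EFinD -?EFinM ltry.
apply: (pmule_le_lty kappa_gt0 _ MI_lty).
rewrite -ge0_integralZl//; last 2 first.
- exact: measurable_funTS.
- exact: ltW.
apply: le_trans integral3_K_le.
rewrite (fubini_tonelli3 mu mu mu K_ge0 measurable_K).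
apply: le_trans
  (ge0_subset_integral mu mab measurableT _ _ (@subsetT _ _)); last 2 first.
- exact: measurable_fun_integral21.
- by move=> z _; do 2!apply: integral_ge0 => ? _.
apply: ge0_le_integral => //.
- by move=> z _; rewrite mule_ge0// ltW.
- by apply: emeasurable_funM => //; exact: measurable_funTS.
- exact/measurable_funTS/measurable_fun_integral21.
move=> z; rewrite /= in_itv /= => abz.
by rewrite integral2_K lee_wpmul2r// kappa_le_Lambda.
Qed.

End local_integrability.

Local Close Scope ereal_scope.
Unset Implicit Arguments.

Theorem lemma3p2 (R : realType) (p : R -> R -> R) (q : R -> \bar R)
  (s t M : R) :
  subordinator_density p ->
  measurable_fun [set: R] q ->
  (forall z, (0 <= q z)%E) ->
  s < t ->
  (forall x : R,
     (\int[lebesgue_measure]_(u in `]s, t[)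
        \int[lebesgue_measure]_z ((ptrans p s x u z)%:E * q z) <= M%:E)%E) ->
  forall A : set R, compact A -> lebesgue_measure.-integrable A q.
Proof.
move=> hp mq q0 st hM A cA.
have [a [b Aab]] := compact_sub_itvcc cA.
have mA : measurable A.
  by apply: closed_measurable; apply: compact_closed => //; exact: Rhausdorff.
apply/integrableP; split; first exact: measurable_funTS.
apply: le_lt_trans (integral_itvcc_lty hp mq q0 st hM a b).
under eq_integral => x _ do rewrite gee0_abs//.
exact: (ge0_subset_integral lebesgue_measure mA (measurable_itv _)
  (measurable_funTS mq) (fun x _ => q0 x) Aab).
Qed.
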